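(* For every pair of nonnegative integers $(p,q)$ with $p\leq q$ there exists a positive integer $n$ with $\nu(n)=p$ and $e(n)=q$. Equivalently, the map $\Phi:\mathbb{N}_{+}\to\{(a,b)\in\mathbb{N}\times\mathbb{N}:\;a\leq b\}$, $\Phi(n)=(d(n),e(n))$, is well defined and surjective.
   Context: The Stern polynomials $B_n(t)\in\mathbb{Z}[t]$ are defined by $B_0(t)=0$, $B_1(t)=1$, and for $n\geq 1$: $B_{2n}(t)=tB_n(t)$, $B_{2n+1}(t)=B_n(t)+B_{n+1}(t)$. For $n\geq 1$ let $e(n)=\deg B_n(t)$, $d(n)=\operatorname{ord}_{t=0}B_n(t)$ (the largest $k$ with $t^k\mid B_n(t)$), and $\nu(n)=\max\{k:\;2^k\mid n\}$. *)

From HB Require Import structures.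
From mathcomp Require Import all_boot all_order all_algebra.
Set Implicit Arguments. Unset Strict Implicit. Unset Printing Implicit Defensive.
Import GRing.Theory.
Local Open Scope ring_scope.

(* Fuel-based evaluation of the Stern polynomial recursion;
   fuel k >= n suffices (arguments strictly decrease for n >= 2). *)
Fixpoint sternF (k n : nat) : {poly int} :=
  match k with
  | 0%N => 0
  | k'.+1 =>
      if n == 0%N then 0
      else if n == 1%N then 1
      else if odd n then sternF k' n./2 + sternF k' (n./2).+1
      else 'X * sternF k' n./2
  end.

Definition stern (n : nat) : {poly int} := sternF n n.

Definition e_deg (n : nat) : nat := (size (stern n)).-1.

Definition nu (n : nat) : nat := logn 2 n.

Definition ord0_is (P : {poly int}) (k : nat) : Prop :=
  dvdp 'X^k P /\ ~~ dvdp 'X^(k.+1) P.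

From HB Require Import structures.
From mathcomp Require Import all_boot all_order all_algebra.
From mathcomp Require Import zify.
Set Implicit Arguments.
Unset Strict Implicit.
Unset Printing Implicit Defensive.
Import GRing.Theory.
Local Open Scope ring_scope.

(* Every pair (p, q) with p <= q is realised by n = 2^p (2^(q-p+1) - 1).

   Two consequences are
   isolated: B_n(0) = n mod 2, and B_(2^p m) = t^p B_m.  Hence for odd m the
   polynomial B_(2^p m) is t^p times a polynomial with constant term 1, so
   its order at 0 is exactly p, its degree is p + e(m), and nu(2^p m) = p.
   Every n > 0 has this shape (2-adic decomposition), which shows that d(n)
   exists and is at most e(n).  Finally B_(2^k - 1) = 1 + t + ... + t^(k-1)
   has degree k - 1, and the witness above gives both surjectivity claims. *)

Lemma sternF_fuel k k' n : (n <= k)%N -> (n <= k')%N -> sternF k n = sternF k' n.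
Proof.
elim: k k' n => [|k IH] [|k'] n /=;
  try (move=> h1 h2; have -> : n = 0%N by lia); try done.
move=> h1 h2; case: ifP => // /eqP n0; case: ifP => // /eqP n1.
have hd := odd_double_half n; rewrite -addnn in hd.
by case: ifP => ho; rewrite ho /= in hd; [congr (_ + _) | congr (_ * _)];
  apply: IH; lia.
Qed.

Lemma stern_fuel k n : (n <= k)%N -> sternF k n = stern n.
Proof. by move=> h; rewrite /stern (@sternF_fuel k n n h). Qed.

Lemma stern_unfold n : (2 <= n)%N -> stern n =
  if odd n then stern n./2 + stern (n./2).+1 else 'X * stern n./2.
Proof.
case: n => [//|m] h; have hd := odd_double_half m.+1; rewrite -addnn in hd.
rewrite {1}/stern /=; have -> : (m.+1 == 1%N) = false by apply/eqP; lia.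
by case: ifP => ho; rewrite /= ho /= in hd; rewrite ?stern_fuel //; lia.
Qed.

Lemma stern_even n : stern n.*2 = 'X * stern n.
Proof.
case: n => [|n]; first by rewrite /stern /= mulr0.
by rewrite stern_unfold ?odd_double ?doubleK // doubleS.
Qed.

Lemma stern_odd n : (0 < n)%N -> stern n.*2.+1 = stern n + stern n.+1.
Proof.
move=> n_gt0; rewrite stern_unfold; last by rewrite -addnn; lia.
by rewrite /= odd_double uphalf_double.
Qed.

Lemma stern_eval0 n : (stern n).[0] = (odd n)%:R.
Proof.
elim: n {-2}n (leqnn n) => [|N IH] [|[|n]] hn; rewrite ?horner0 ?hornerC //.
have hd := odd_double_half n.+2; rewrite -addnn in hd.
rewrite stern_unfold //; case: ifP => ho; rewrite ho /= in hd.
- by rewrite hornerD !IH //; lia.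
- by rewrite hornerM hornerX mul0r.
Qed.

Lemma stern_2pow p m : stern (2 ^ p * m) = 'X^p * stern m.
Proof.
elim: p => [|p IH]; first by rewrite expn0 mul1n expr0 mul1r.
by rewrite expnS -mulnA mul2n stern_even IH exprS mulrA.
Qed.

Lemma stern_odd_eval0 m : odd m -> (stern m).[0] = 1.
Proof. by move=> om; rewrite stern_eval0 om. Qed.

Lemma stern_odd_neq0 m : odd m -> stern m != 0.
Proof. by move=> /stern_odd_eval0 h; apply/eqP => e; rewrite e horner0 in h. Qed.

Lemma dvdp_Xn_deg (R : idomainType) (P : {poly R}) k :
  P != 0 -> dvdp 'X^k P -> (k <= (size P).-1)%N.
Proof.
move=> P_neq0 /(dvdp_leq P_neq0); rewrite size_polyXn => h.
by rewrite -ltnS (ltn_predK h).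
Qed.

Lemma Xn_mul_ndvd (R : idomainType) (P : {poly R}) p :
  P.[0] != 0 -> ~~ dvdp 'X^(p.+1) ('X^p * P).
Proof.
move=> P0; rewrite exprSr -[X in dvdp _ (X * _)]mulr1 -mulrA dvdp_mul2l; last first.
  by rewrite expf_neq0 // polyX_eq0.
by rewrite mul1r -[X in dvdp X _]subr0 -polyC0 dvdp_XsubCl.
Qed.

Lemma ord0_Xn_mul p (P : {poly int}) : P.[0] != 0 -> ord0_is ('X^p * P) p.
Proof. by move=> P0; split; [exact/dvdp_mulr/dvdpp | exact: Xn_mul_ndvd]. Qed.

Section Dyadic.
Variables (p m : nat).
Hypothesis m_odd : odd m.

Lemma nu_dyadic : nu (2 ^ p * m) = p.
Proof. by rewrite /nu mulnC logn_Gauss ?pfactorK // coprime2n. Qed.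

Lemma ord0_dyadic : ord0_is (stern (2 ^ p * m)) p.
Proof. by rewrite stern_2pow; apply: ord0_Xn_mul; rewrite stern_odd_eval0. Qed.

Lemma stern_dyadic_neq0 : stern (2 ^ p * m) != 0.
Proof.
by rewrite stern_2pow mulf_neq0 ?stern_odd_neq0 // expf_neq0 // polyX_eq0.
Qed.

Lemma e_deg_dyadic : e_deg (2 ^ p * m) = (p + e_deg m)%N.
Proof.
have := stern_odd_neq0 m_odd; rewrite -size_poly_gt0 => sz_gt0.
rewrite /e_deg stern_2pow size_mul ?stern_odd_neq0 ?size_polyXn //.
  by case: size sz_gt0 => // s _; rewrite addSn addnS.
by rewrite expf_neq0 // polyX_eq0.
Qed.
End Dyadic.

Lemma dyadic_decomp n : (0 < n)%N -> exists p m, odd m /\ n = (2 ^ p * m)%N.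
Proof.
move=> /(@pfactor_coprime 2 n isT) [m m_odd ->].
by exists (logn 2 n), m; rewrite -coprime2n mulnC.
Qed.

Lemma stern_ones_rec k : stern (2 ^ k.+1 - 1) = stern (2 ^ k - 1) + 'X^k.
Proof.
case: k => [|k]; first by rewrite /stern /= add0r expr0.
have h2 : (2 <= 2 ^ k.+1)%N by rewrite -{1}(expn1 2) leq_pexp2l.
have -> : (2 ^ k.+2 - 1 = (2 ^ k.+1 - 1).*2.+1)%N by rewrite expnS -addnn; lia.
rewrite stern_odd; last lia.
have -> : (2 ^ k.+1 - 1).+1 = (2 ^ k.+1 * 1)%N by lia.
by rewrite stern_2pow mulr1.
Qed.

Lemma size_stern_ones k : size (stern (2 ^ k - 1)) = k.
Proof.
elim: k => [|k IH]; first by rewrite expn0 subnn size_poly0.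
by rewrite stern_ones_rec addrC size_polyDl ?size_polyXn ?IH.
Qed.

Lemma odd_ones k : odd (2 ^ k.+1 - 1).
Proof. by rewrite oddB ?expn_gt0 // oddX. Qed.

Definition stern_witness (p q : nat) : nat := (2 ^ p * (2 ^ (q - p).+1 - 1))%N.

Lemma stern_witness_spec p q : (p <= q)%N ->
  [/\ (0 < stern_witness p q)%N, nu (stern_witness p q) = p,
      e_deg (stern_witness p q) = q & ord0_is (stern (stern_witness p q)) p].
Proof.
move=> le_pq; have m_odd := odd_ones (q - p).
split; rewrite /stern_witness ?nu_dyadic ?e_deg_dyadic //.
- by rewrite muln_gt0 expn_gt0 /=; case: (_ - 1)%N m_odd.
- by rewrite /e_deg size_stern_ones; lia.
- exact: ord0_dyadic.
Qed.

Theorem mainTheorem2 :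
  (forall p q : nat, (p <= q)%N ->
     exists n : nat, (0 < n)%N /\ nu n = p /\ e_deg n = q) /\
  (forall n : nat, (0 < n)%N ->
     (exists k : nat, ord0_is (stern n) k) /\
     (forall k : nat, ord0_is (stern n) k -> (k <= e_deg n)%N)) /\
  (forall p q : nat, (p <= q)%N ->
     exists n : nat, (0 < n)%N /\ ord0_is (stern n) p /\ e_deg n = q).
Proof.
split; last split.
- by move=> p q /stern_witness_spec [? ? ? ?]; exists (stern_witness p q).
- move=> n /dyadic_decomp [p [m [m_odd ->]]]; split.
    by exists p; exact: ord0_dyadic.
  by move=> k [dvd_k _]; exact: dvdp_Xn_deg (stern_dyadic_neq0 p m_odd) dvd_k.
- by move=> p q /stern_witness_spec [? ? ? ?]; exists (stern_witness p q).
Qed.
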